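(* Let $M$ and $N$ be objects of an abelian category $\mathcal{A}$. (1) Assume that every direct summand of $M$ is isomorphic to a subobject of $N$. Then $N$ is strongly $M$-Rickart if and only if $N$ is $M$-Rickart and $M$ is weak duo. (2) Assume that every direct summand of $N$ is isomorphic to a factor object of $M$. Then $N$ is dual strongly $M$-Rickart if and only if $N$ is dual $M$-Rickart and $N$ is weak duo.
   Context: A morphism $f:X\to Y$ is a section if $f'f=1_X$ for some $f':Y\to X$, and a retraction if $ff'=1_Y$ for some $f':Y\to X$. A monomorphism $k:K\to M$ is fully invariant if for every $h:M\to M$ there is $\alpha:K\to K$ with $hk=k\alpha$; an epimorphism $c:M\to C$ is fully coinvariant if for every $h:M\to M$ there is $\gamma:C\to C$ with $ch=\gamma c$. For objects $M,N$ of an abelian category: $N$ is $M$-Rickart if the kernel ${\rm ker}(f):{\rm Ker}(f)\to M$ of every morphism $f:M\to N$ is a section; $N$ is dual $M$-Rickart if the cokernel ${\rm coker}(f):N\to{\rm Coker}(f)$ of every morphism $f:M\to N$ is a retraction (equivalently the image ${\rm im}(f)$ is a section); $N$ is strongly $M$-Rickart if the kernel of every morphism $f:M\to N$ is a fully invariant section; $N$ is dual strongly $M$-Rickart if the cokernel of every morphism $f:M\to N$ is a fully coinvariant retraction (equivalently the image of every $f:M\to N$ is a fully invariant section). An object $M$ is weak duo if every section $K\to M$ is fully invariant (equivalently, every retraction $M\to C$ is fully coinvariant). *)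

From HB Require Import structures.
From mathcomp Require Import all_boot all_algebra.
Set Implicit Arguments.
Unset Strict Implicit.
Unset Printing Implicit Defensive.
Import GRing.Theory.
Local Open Scope ring_scope.

(** Preadditive categories: Hom-sets are abelian groups, composition is
    associative, unital and bilinear. [comp g f] is "g after f" (written gf). *)
Record PreaddCat : Type := {
  Obj :> Type;
  Hom : Obj -> Obj -> zmodType;
  comp : forall A B C : Obj, Hom B C -> Hom A B -> Hom A C;
  idm : forall A : Obj, Hom A A;
  comp_assoc : forall A B C D (h : Hom C D) (g : Hom B C) (f : Hom A B),
      comp h (comp g f) = comp (comp h g) f;
  comp_id_l : forall A B (f : Hom A B), comp (idm B) f = f;
  comp_id_r : forall A B (f : Hom A B), comp f (idm A) = f;
  comp_addl : forall A B C (g g' : Hom B C) (f : Hom A B),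
      comp (g + g') f = comp g f + comp g' f;
  comp_addr : forall A B C (g : Hom B C) (f f' : Hom A B),
      comp g (f + f') = comp g f + comp g f'
}.
Arguments Hom {C} : rename.
Arguments comp {C A B C0} : rename.
Arguments idm {C} : rename.

Section Notions.
Variable C : PreaddCat.

Definition mono {A B : C} (m : Hom A B) : Prop :=
  forall X (g g' : Hom X A), comp m g = comp m g' -> g = g'.
Definition epi {A B : C} (e : Hom A B) : Prop :=
  forall Y (g g' : Hom B Y), comp g e = comp g' e -> g = g'.

Definition section {X Y : C} (f : Hom X Y) : Prop :=
  exists f' : Hom Y X, comp f' f = idm X.
Definition retraction {X Y : C} (f : Hom X Y) : Prop :=
  exists f' : Hom Y X, comp f f' = idm Y.

Definition is_kernel {A B K : C} (f : Hom A B) (k : Hom K A) : Prop :=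
  comp f k = 0 /\
  forall X (g : Hom X A), comp f g = 0 ->
    exists u : Hom X K, comp k u = g /\ forall u' : Hom X K, comp k u' = g -> u' = u.
Definition is_cokernel {A B Q : C} (f : Hom A B) (c : Hom B Q) : Prop :=
  comp c f = 0 /\
  forall Y (g : Hom B Y), comp g f = 0 ->
    exists u : Hom Q Y, comp u c = g /\ forall u' : Hom Q Y, comp u' c = g -> u' = u.

Definition abelian : Prop :=
  (exists Z : C, forall A : C,
      (forall f g : Hom Z A, f = g) /\ (forall f g : Hom A Z, f = g)) /\
  (forall A B : C, exists (P : C) (i1 : Hom A P) (p1 : Hom P A)
                          (i2 : Hom B P) (p2 : Hom P B),
      [/\ comp p1 i1 = idm A, comp p2 i2 = idm B, comp p1 i2 = 0,
          comp p2 i1 = 0 & comp i1 p1 + comp i2 p2 = idm P]) /\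
  (forall (A B : C) (f : Hom A B), exists (K : C) (k : Hom K A), is_kernel f k) /\
  (forall (A B : C) (f : Hom A B), exists (Q : C) (c : Hom B Q), is_cokernel f c) /\
  (forall (A B : C) (m : Hom A B), mono m ->
      exists (Q : C) (g : Hom B Q), is_kernel g m) /\
  (forall (A B : C) (e : Hom A B), epi e ->
      exists (K : C) (g : Hom K A), is_cokernel g e).

Definition fully_invariant {K M : C} (k : Hom K M) : Prop :=
  forall h : Hom M M, exists alpha : Hom K K, comp h k = comp k alpha.
Definition fully_coinvariant {M Q : C} (c : Hom M Q) : Prop :=
  forall h : Hom M M, exists gamma : Hom Q Q, comp c h = comp gamma c.

Definition rickart (M N : C) : Prop :=
  forall (f : Hom M N) (K : C) (k : Hom K M), is_kernel f k -> section k.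
Definition dual_rickart (M N : C) : Prop :=
  forall (f : Hom M N) (Q : C) (c : Hom N Q), is_cokernel f c -> retraction c.
Definition strongly_rickart (M N : C) : Prop :=
  forall (f : Hom M N) (K : C) (k : Hom K M), is_kernel f k ->
    fully_invariant k /\ section k.
Definition dual_strongly_rickart (M N : C) : Prop :=
  forall (f : Hom M N) (Q : C) (c : Hom N Q), is_cokernel f c ->
    fully_coinvariant c /\ retraction c.
Definition weak_duo (M : C) : Prop :=
  forall (K : C) (k : Hom K M), section k -> fully_invariant k.

Definition summands_embed (M N : C) : Prop :=
  forall (K : C) (k : Hom K M), section k -> exists m : Hom K N, mono m.
Definition summands_factor (M N : C) : Prop :=
  forall (K : C) (k : Hom K N), section k -> exists e : Hom M K, epi e.

End Notions.

From mathcomp Require Import all_boot ssralg.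

(* A section k : K -> X with retraction r splits X: the kernel k' of r is a
   section with k' u = 1 - k r, so k is the kernel of u, hence of m u for any
   mono m out of the summand K'.  Dually, if c is a cokernel of k then
   1 - k r factors as v c, and h k = k (r h k) + v c h k shows that k is fully
   invariant as soon as c is fully coinvariant; symmetrically a retraction c
   with section s satisfies c h = (c h s) c once its kernel is fully
   invariant.  In (1) the embedding of summands of M into N makes every
   summand of M a kernel of a map M -> N; in (2) the epimorphism M -> K onto
   a summand K of N makes the cokernel of k a cokernel of a map M -> N. *)

Set Implicit Arguments.
Unset Strict Implicit.
Unset Printing Implicit Defensive.
Import GRing.Theory.
Local Open Scope ring_scope.

Section Preadditive.
Variable C : PreaddCat.

Lemma comp0l (A B D : C) (f : Hom A B) : comp (0 : Hom B D) f = 0.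
Proof.
have := comp_addl (0 : Hom B D) 0 f; rewrite addr0 => E.
by apply: (addrI (comp (0 : Hom B D) f)); rewrite addr0 -E.
Qed.

Lemma comp0r (A B D : C) (g : Hom B D) : comp g (0 : Hom A B) = 0.
Proof.
have := comp_addr g (0 : Hom A B) 0; rewrite addr0 => E.
by apply: (addrI (comp g (0 : Hom A B))); rewrite addr0 -E.
Qed.

Lemma compBl (A B D : C) (g g' : Hom B D) (f : Hom A B) :
  comp (g - g') f = comp g f - comp g' f.
Proof.
apply: (addrI (comp g' f)).
by rewrite -comp_addl [g' + _]addrC subrK [comp g' f + _]addrC subrK.
Qed.

Lemma compBr (A B D : C) (g : Hom B D) (f f' : Hom A B) :
  comp g (f - f') = comp g f - comp g f'.
Proof.
apply: (addrI (comp g f')).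
by rewrite -comp_addr [f' + _]addrC subrK [comp g f' + _]addrC subrK.
Qed.

Lemma section_mono (A B : C) (k : Hom A B) : section k -> mono k.
Proof.
move=> [r Hrk] X g g' E.
by rewrite -(comp_id_l g) -(comp_id_l g') -Hrk -!comp_assoc E.
Qed.

Lemma kernel_mono (A B K : C) (f : Hom A B) (k : Hom K A) :
  is_kernel f k -> mono k.
Proof.
move=> [Hfk Hk] X g g' E.
have [u [_ Hu]] := Hk X (comp k g) ltac:(by rewrite comp_assoc Hfk comp0l).
by rewrite (Hu g erefl) (Hu g' (esym E)).
Qed.

Lemma kernel_comp_mono (A B D K : C) (m : Hom B D) (f : Hom A B) (k : Hom K A) :
  mono m -> is_kernel (comp m f) k <-> is_kernel f k.
Proof.
move=> Hm.
have E X (g : Hom X A) : comp (comp m f) g = 0 <-> comp f g = 0.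
  rewrite -comp_assoc; split=> [|->]; last exact: comp0r.
  by move=> Hmfg; apply: Hm; rewrite Hmfg comp0r.
by split=> -[Hfk Hk]; split=> [|X g /E]; by [apply/E | apply: Hk].
Qed.

Lemma cokernel_comp_epi (A B D Q : C) (e : Hom D A) (f : Hom A B)
    (c : Hom B Q) :
  epi e -> is_cokernel (comp f e) c -> is_cokernel f c.
Proof.
move=> He [Hcfe Hc]; split.
  by apply: He; rewrite comp0l -comp_assoc.
by move=> Y g Hgf; apply: Hc; rewrite comp_assoc Hgf comp0l.
Qed.

Lemma section_kernel (K X : C) (k : Hom K X) (r : Hom X K) :
  comp r k = idm K -> is_kernel (idm X - comp k r) k.
Proof.
move=> Hrk; split.
  by rewrite compBl comp_id_l -comp_assoc Hrk comp_id_r subrr.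
move=> Y g; rewrite compBl comp_id_l => /eqP; rewrite subr_eq0 => /eqP Hg.
exists (comp r g); split; first by rewrite comp_assoc.
by move=> u <-; rewrite comp_assoc Hrk comp_id_l.
Qed.

Lemma kernel_of_retraction (A X K : C) (c : Hom X A) (s : Hom A X)
    (k : Hom K X) :
  comp c s = idm A -> is_kernel c k ->
  exists2 u : Hom X K, comp k u = idm X - comp s c & comp u k = idm K.
Proof.
move=> Hcs Hk; have [Hck Hkuniv] := Hk.
have [u [Hku _]] := Hkuniv _ (idm X - comp s c)
  ltac:(by rewrite compBr comp_id_r comp_assoc Hcs comp_id_l subrr).
exists u => //; apply: (kernel_mono Hk).
rewrite comp_id_r comp_assoc Hku compBl comp_id_l -comp_assoc Hck.
by rewrite comp0r subr0.
Qed.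

Lemma fully_invariant_of_cokernel (K X Q : C) (k : Hom K X) (r : Hom X K)
    (c : Hom X Q) :
  comp r k = idm K -> is_cokernel k c -> fully_coinvariant c ->
  fully_invariant k.
Proof.
move=> Hrk [Hck Hc] Hcoinv h.
have [v [Hvc _]] := Hc _ (idm X - comp k r)
  ltac:(by rewrite compBl comp_id_l -comp_assoc Hrk comp_id_r subrr).
have [gam Hgam] := Hcoinv h.
exists (comp r (comp h k)).
have : comp (comp v c) (comp h k) = 0.
  by rewrite -comp_assoc (comp_assoc c) Hgam -comp_assoc Hck !comp0r.
rewrite Hvc compBl comp_id_l => /eqP; rewrite subr_eq0 => /eqP {1}->.
by rewrite -comp_assoc.
Qed.

Lemma fully_coinvariant_of_kernel (A X K : C) (c : Hom X A) (s : Hom A X)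
    (k : Hom K X) :
  comp c s = idm A -> is_kernel c k -> fully_invariant k -> fully_coinvariant c.
Proof.
move=> Hcs Hk Hinv h.
have [u Hku _] := kernel_of_retraction Hcs Hk.
have [bet Hbet] := Hinv h.
exists (comp c (comp h s)).
have Hsplit : idm X = comp s c + comp k u by rewrite Hku addrC subrK.
rewrite -(comp_id_r (comp c h)) Hsplit comp_addr !comp_assoc.
rewrite -(comp_assoc c h k) Hbet comp_assoc (proj1 Hk) !comp0l addr0.
by rewrite -!comp_assoc.
Qed.

End Preadditive.

Section Abelian.
Variable C : PreaddCat.
Hypothesis HC : abelian C.

Lemma abelian_kernel (A B : C) (f : Hom A B) :
  exists (K : C) (k : Hom K A), is_kernel f k.
Proof. by have [_ [_ [Hker _]]] := HC; exact: Hker. Qed.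

Lemma abelian_cokernel (A B : C) (f : Hom A B) :
  exists (Q : C) (c : Hom B Q), is_cokernel f c.
Proof. by have [_ [_ [_ [Hcok _]]]] := HC; exact: Hcok. Qed.

Lemma strongly_rickart_weak_duo (M N : C) :
  summands_embed M N -> strongly_rickart M N -> weak_duo M.
Proof.
move=> Hemb Hs K k [r Hrk].
have [K' [k' Hk']] := abelian_kernel r.
have [u Hk'u Huk'] := kernel_of_retraction Hrk Hk'.
have [m Hm] := Hemb K' k' (ex_intro _ u Huk').
have Huk : is_kernel u k.
  apply/(kernel_comp_mono _ _ (section_mono (ex_intro _ u Huk'))).
  by rewrite Hk'u; exact: section_kernel.
by have [] := Hs _ _ _ (proj2 (kernel_comp_mono _ _ Hm) Huk).
Qed.

Lemma dual_strongly_rickart_weak_duo (M N : C) :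
  summands_factor M N -> dual_strongly_rickart M N -> weak_duo N.
Proof.
move=> Hfac Hs K k [r Hrk].
have [e He] := Hfac K k (ex_intro _ r Hrk).
have [Q [c Hc]] := abelian_cokernel (comp k e).
have [Hcoinv _] := Hs _ _ _ Hc.
exact: fully_invariant_of_cokernel Hrk (cokernel_comp_epi He Hc) Hcoinv.
Qed.

Lemma weak_duo_dual_strongly_rickart (M N : C) :
  dual_rickart M N -> weak_duo N -> dual_strongly_rickart M N.
Proof.
move=> Hr Hw f Q c Hc; have [s Hcs] := Hr f Q c Hc.
split; last by exists s.
have [K [k Hk]] := abelian_kernel c.
have [u _ Huk] := kernel_of_retraction Hcs Hk.
exact: fully_coinvariant_of_kernel Hcs Hk (Hw K k (ex_intro _ u Huk)).
Qed.

End Abelian.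

Theorem proposition2p9 (C : PreaddCat) (HC : abelian C) (M N : C) :
  (summands_embed M N ->
     (strongly_rickart M N <-> rickart M N /\ weak_duo M)) /\
  (summands_factor M N ->
     (dual_strongly_rickart M N <-> dual_rickart M N /\ weak_duo N)).
Proof.
split=> Hsum; split.
- move=> Hs; split; last exact: strongly_rickart_weak_duo Hs.
  by move=> f K k /Hs [].
- by move=> [Hr Hw] f K k /Hr Hk; split=> //; exact: Hw.
- move=> Hs; split; last exact: dual_strongly_rickart_weak_duo Hs.
  by move=> f Q c /Hs [].
- by move=> [Hr Hw]; exact: weak_duo_dual_strongly_rickart.
Qed.
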